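(* Let $G$ be a torsion-free locally compact abelian group and let $G^{*}$ be its minimal divisible extension. Then $G_{op}\subseteq G^{*}_{op}$.
   Context: A subgroup $H$ of an abelian group $G$ is pure if $nH=H\cap nG$ for every positive integer $n$. For an LCA group $G$, $G_{op}$ denotes the intersection of all open pure subgroups of $G$. For an LCA group $G$, $G^{*}$ denotes the minimal divisible extension (divisible hull) of $G$, topologized as an LCA group containing $G$ as an open subgroup (as in Hewitt–Ross 4.18.h); for torsion-free $G$, $G^{*}$ is torsion-free. *)

From HB Require Import structures.
From mathcomp Require Import all_boot all_order all_algebra.
From mathcomp Require Import all_classical all_reals all_analysis.
Set Implicit Arguments. Unset Strict Implicit. Unset Printing Implicit Defensive.
Import GRing.Theory.
Local Open Scope classical_set_scope.
Local Open Scope ring_scope.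

Definition LCA (G : topologicalZmodType) : Prop :=
  hausdorff_space G /\ locally_compact [set: G].

Definition subgroup (G : zmodType) (H : set G) : Prop :=
  H 0 /\ (forall x y, H x -> H y -> H (x - y)).

Definition pure (G : zmodType) (H : set G) : Prop :=
  subgroup H /\
  forall n : nat, (0 < n)%N ->
    [set h *+ n | h in H] = H `&` [set g *+ n | g in [set: G]].

Definition Gop (G : topologicalZmodType) : set G :=
  [set x | forall H : set G, open H -> pure H -> H x].
Arguments Gop G _ : clear implicits.

Definition torsion_free (G : zmodType) : Prop :=
  forall (x : G) (n : nat), (0 < n)%N -> x *+ n = 0 -> x = 0.

Definition divisible_set (G : zmodType) (D : set G) : Prop :=
  forall x n, (0 < n)%N -> D x -> exists2 y, D y & y *+ n = x.

Definition divisible (G : zmodType) : Prop := divisible_set [set: G].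

Definition minimal_divisible_extension (G Gs : topologicalZmodType)
  (iota : G -> Gs) : Prop :=
  LCA Gs /\
  (forall x y, iota (x + y) = iota x + iota y) /\
  injective iota /\
  continuous iota /\ (forall U : set G, open U -> open (iota @` U)) /\
  divisible Gs /\
  (forall D : set Gs, subgroup D -> divisible_set D ->
        iota @` [set: G] `<=` D -> D = [set: Gs]).

(* If G* is torsion-free, then for every open
   pure subgroup H of G* the preimage iota^-1(H) is open (iota is continuous)
   and pure in G (an n-th root in H of iota (y *+ n) must be iota y itself), so
   it contains G_op.

   The algebraic part is that a divisible group V which is minimal among the
   divisible subgroups containing a torsion-free subgroup A is torsion-free.
   By Zorn's lemma A lies in a maximal torsion-free subgroup M.  Maximality
   makes the subgroup M + T (T = torsion elements) pure, hence divisible, so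
   M + T = V by minimality; then M itself is divisible, so M = V. *)
From HB Require Import structures.
From mathcomp Require Import all_boot all_order all_algebra.
From mathcomp Require Import all_classical all_reals all_analysis.
Set Implicit Arguments. Unset Strict Implicit. Unset Printing Implicit Defensive.
Import GRing.Theory.
Local Open Scope classical_set_scope.
Local Open Scope ring_scope.

Section Subgroups.
Variable V : zmodType.
Implicit Types (S : set V) (x y : V).

Lemma subgroup0 S : subgroup S -> S 0.
Proof. by case. Qed.

Lemma subgroupB S x y : subgroup S -> S x -> S y -> S (x - y).
Proof. by case=> _; apply. Qed.

Lemma subgroupN S x : subgroup S -> S x -> S (- x).
Proof. by move=> sgS Sx; rewrite -sub0r; apply: subgroupB => //; exact: subgroup0. Qed.

Lemma subgroupD S x y : subgroup S -> S x -> S y -> S (x + y).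
Proof.
by move=> sgS Sx Sy; rewrite -[y]opprK; apply: subgroupB => //; exact: subgroupN.
Qed.

Lemma subgroupMn S x n : subgroup S -> S x -> S (x *+ n).
Proof.
move=> sgS Sx; elim: n => [|n IHn]; first by rewrite mulr0n; exact: subgroup0.
by rewrite mulrS; exact: subgroupD.
Qed.

Lemma subgroupMz S x (z : int) : subgroup S -> S x -> S (x *~ z).
Proof.
move=> sgS Sx; case: z => n; first exact: subgroupMn.
exact: (subgroupN sgS (subgroupMn n.+1 sgS Sx)).
Qed.

Lemma subgroup_bigcup_chain (F : set (set V)) :
  (forall S, F S -> subgroup S) -> total_on F subset -> F !=set0 ->
  subgroup (\bigcup_(S in F) S).
Proof.
move=> Fsg Ftot [S0 FS0]; split; first by exists S0 => //; exact: subgroup0 (Fsg S0 FS0).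
move=> x y [X FX Xx] [Y FY Yy].
have [XY|YX] := Ftot X Y FX FY.
- by exists Y => //; exact: subgroupB (Fsg Y FY) (XY x Xx) Yy.
- by exists X => //; exact: subgroupB (Fsg X FX) Xx (YX y Yy).
Qed.

Definition adjoin S w : set V := fun z => exists2 m, S m & exists j : int, z = m + w *~ j.

Lemma adjoin_subgroup S w : subgroup S -> subgroup (adjoin S w).
Proof.
move=> sgS; split; first by exists 0; [exact: subgroup0 | exists 0; rewrite mulr0z addr0].
move=> _ _ [m1 Sm1 [j1 ->]] [m2 Sm2 [j2 ->]].
exists (m1 - m2); first exact: subgroupB.
by exists (j1 - j2); rewrite mulrzBr opprD addrACA.
Qed.

Lemma adjoin_proper S w : subgroup S -> ~ S w -> S `<` adjoin S w.
Proof.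
move=> sgS nSw; split=> [m Sm|adjS]; first by exists m => //; exists 0; rewrite mulr0z addr0.
by apply/nSw/adjS; exists 0; [exact: subgroup0 | exists 1; rewrite mulr1z add0r].
Qed.

End Subgroups.

Section Torsion.
Variable V : zmodType.
Implicit Types (S : set V) (x : V).

Definition torsion x : Prop := exists2 n, (0 < n)%N & x *+ n = 0.

Definition torsion_free_set S : Prop := forall x, S x -> torsion x -> x = 0.

Lemma torsion_subgroup : subgroup torsion.
Proof.
split; first by exists 1%N => //; rewrite mul0rn.
move=> x y [a a0 xa] [b b0 yb]; exists (a * b)%N; first by rewrite muln_gt0 a0.
by rewrite mulrnBl mulrnA xa mul0rn mulnC mulrnA yb mul0rn subr0.
Qed.

Lemma torsion_freeP : torsion_free_set setT -> torsion_free V.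
Proof. by move=> tfV x n n0 xn; apply: tfV => //; exists n. Qed.

Lemma divisible_torsion_root x n : divisible V -> (0 < n)%N -> torsion x ->
  exists2 y, torsion y & y *+ n = x.
Proof.
move=> Vdiv n0 [k k0 xk]; have [y _ yn] := Vdiv x n n0 I.
by exists y => //; exists (n * k)%N; rewrite ?muln_gt0 ?n0 // mulrnA yn.
Qed.

End Torsion.

Arguments torsion_subgroup {V}.

Lemma Zorn_nonempty_chains (T : Type) (P : set (set T)) (A : set T) :
  P A ->
  (forall F : set (set T), F `<=` P -> total_on F subset -> F !=set0 ->
     P (\bigcup_(X in F) X)) ->
  exists M, P M /\ forall B, M `<` B -> ~ P B.
Proof.
move=> PA Pchain.
have [|M [PM Mmax]] := @Zorn_bigcup T (fun S => S = set0 \/ P S).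
  move=> F FP Ftot.
  have [[X0 [FX0 PX0]]|noP] := pselect (exists X, F X /\ P X); last first.
    left; apply/seteqP; split=> [x [X FX Xx]|x []].
    by case: (FP X FX) => [Xempty|PX]; [rewrite Xempty in Xx | apply: noP; exists X].
  right; have -> : \bigcup_(X in F) X = \bigcup_(X in F `&` P) X.
    apply/seteqP; split=> x [X FX Xx]; last by exists X => //; case: FX.
    by exists X => //; split=> //; case: (FP X FX) => // Xempty; rewrite Xempty in Xx.
  apply: Pchain; [by move=> X [] | | by exists X0].
  by move=> X Y [FX _] [FY _]; exact: Ftot.
case: PM => [M0|PM]; last by exists M; split=> // B MB PB; apply: (Mmax B MB); right.
have [[a Aa]|A0] := pselect (A !=set0).
  by exfalso; apply: (Mmax A); [rewrite M0; split=> [x []|/(_ a Aa) []] | right].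
have MA : M = A.
  by rewrite M0; apply/seteqP; split=> [x []|x Ax]; apply: A0; exists x.
by exists A; split=> // B AB PB; apply: (Mmax B); [rewrite MA | right].
Qed.

Lemma maximal_torsion_free_subgroup (V : zmodType) (A : set V) :
  subgroup A -> torsion_free_set A ->
  exists M : set V, [/\ subgroup M, A `<=` M, torsion_free_set M &
    forall B, subgroup B -> M `<` B -> ~ torsion_free_set B].
Proof.
move=> sgA tfA.
pose P S := [/\ subgroup S, A `<=` S & torsion_free_set S].
have PA : P A by split.
have Pchain F : F `<=` P -> total_on F subset -> F !=set0 ->
    P (\bigcup_(X in F) X).
  move=> FP Ftot [X0 FX0]; have [_ AX0 _] := FP X0 FX0; split.
  - by apply: (subgroup_bigcup_chain _ Ftot); [move=> S /FP[] | exists X0].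
  - by move=> a Aa; exists X0 => //; exact: AX0.
  - by move=> x [X FX Xx]; have [_ _ tfX] := FP X FX; exact: tfX.
have [M [[sgM AM tfM] Mmax]] := Zorn_nonempty_chains PA Pchain.
exists M; split=> // B sgB MB tfB; apply: (Mmax B MB); split=> //.
exact: subset_trans AM (proj1 MB).
Qed.

(* M + T: the elements that are congruent modulo M to a torsion element. *)
Definition plus_torsion (V : zmodType) (M : set V) : set V :=
  fun z => exists2 m, M m & torsion (z - m).

Section MaximalTorsionFree.
Variables (V : zmodType) (M : set V).
Hypotheses (Vdiv : divisible V) (sgM : subgroup M) (tfM : torsion_free_set M).
Hypothesis Mmax : forall B, subgroup B -> M `<` B -> ~ torsion_free_set B.

Lemma plus_torsion_subgroup : subgroup (plus_torsion M).
Proof.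
split; first by exists 0; rewrite ?subrr; [exact: subgroup0 | exact: subgroup0 torsion_subgroup].
move=> x y [m Mm txm] [m' Mm' tym']; exists (m - m'); first exact: subgroupB.
rewrite opprD addrACA -opprD; exact: subgroupB torsion_subgroup txm tym'.
Qed.

Lemma M_sub_plus_torsion : M `<=` plus_torsion M.
Proof. by move=> m Mm; exists m; rewrite ?subrr //; exact: subgroup0 torsion_subgroup. Qed.

Lemma torsion_sub_plus_torsion : @torsion V `<=` plus_torsion M.
Proof. by move=> t tt; exists 0; rewrite ?subr0 //; exact: subgroup0. Qed.

(* Otherwise M + Zw properly contains M, so it has a nonzero torsion element
   m0 + j w; p cannot divide j, and a Bezout relation a p + b j = 1 writes w
   as a combination of w *+ p in M and j w in M + T. *)
Lemma plus_torsion_prime_root p w : prime p -> M (w *+ p) -> plus_torsion M w.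
Proof.
move=> p_prime Mwp; have [Mw|nMw] := pselect (M w).
  exact: M_sub_plus_torsion.
have [u [[m0 Mm0 [j eu]] tu nu]] : exists u, [/\ adjoin M w u, torsion u & u <> 0].
  apply: contra_notP (Mmax (adjoin_subgroup w sgM) (adjoin_proper sgM nMw)).
  move=> noT u Mwu tu; apply: contrapT => nu; apply: noT; exists u.
  by split.
have [/dvdzP[q ej]|ndj] := boolP (p %| j)%Z.
  exfalso; apply/nu/tfM/tu; rewrite eu ej -mulrzA_C -pmulrn.
  exact: subgroupD sgM Mm0 (subgroupMz q sgM Mwp).
have cop : coprimez p j by move: ndj; rewrite dvdzE coprimezE /= prime_coprime.
have [a [b ab1]] := Bezoutz p j; move/eqP: cop ab1 => -> ab1.
have -> : w = (w *+ p) *~ a + (u - m0) *~ b.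
  by rewrite eu [m0 + _]addrC addrK pmulrn !mulrzA_C -mulrzDr ab1 mulr1z.
have sgMT : subgroup (plus_torsion M) := plus_torsion_subgroup.
apply: (subgroupD sgMT); apply: (subgroupMz _ sgMT); first exact: M_sub_plus_torsion.
by apply: (subgroupB sgMT); [exact: torsion_sub_plus_torsion | exact: M_sub_plus_torsion].
Qed.

(* M + T is p-pure: torsion is absorbed using torsion roots in divisible V. *)
Lemma plus_torsion_pure_prime p w :
  prime p -> plus_torsion M (w *+ p) -> plus_torsion M w.
Proof.
move=> p_prime [m Mm twm].
have [t tt tp] := divisible_torsion_root Vdiv (prime_gt0 p_prime) twm.
have Mwtp : M ((w - t) *+ p) by rewrite mulrnBl tp subKr.
rewrite -(subrK t w); apply: subgroupD plus_torsion_subgroup _ _.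
  exact: plus_torsion_prime_root Mwtp.
exact: torsion_sub_plus_torsion.
Qed.

Lemma plus_torsion_pure n w :
  (0 < n)%N -> plus_torsion M (w *+ n) -> plus_torsion M w.
Proof.
elim/ltn_ind: n w => n IHn w n0 Swn.
have [n_le1|n_gt1] := leqP n 1.
  have n1 : n = 1%N by apply/eqP; rewrite eqn_leq n_le1.
  by rewrite n1 mulr1n in Swn.
have p_prime := pdiv_prime n_gt1.
apply: (IHn (n %/ pdiv n)%N).
- by rewrite ltn_Pdiv ?prime_gt1 ?(ltnW n_gt1).
- by rewrite divn_gt0 ?prime_gt0 // dvdn_leq ?(ltnW n_gt1) ?pdiv_dvd.
- by apply: (plus_torsion_pure_prime p_prime); rewrite -mulrnA divnK ?pdiv_dvd.
Qed.

Lemma plus_torsion_divisible : divisible_set (plus_torsion M).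
Proof.
move=> z n n0 Sz; have [w _ wn] := @Vdiv z n n0 I.
by exists w => //; apply: (plus_torsion_pure n0); rewrite wn.
Qed.

(* Once M + T is everything, M is divisible: an n-th root of z in M is an
   n-th root of z in V corrected by a torsion element that n kills. *)
Lemma divisible_of_plus_torsion_full : plus_torsion M = setT -> divisible_set M.
Proof.
move=> MT_full z n n0 Mz; have [w _ wn] := @Vdiv z n n0 I.
have [m Mm twm] : plus_torsion M w by rewrite MT_full.
exists m => //; have wmn : (w - m) *+ n = 0.
  apply: tfM; last exact: subgroupMn torsion_subgroup twm.
  by rewrite mulrnBl wn; apply: subgroupB => //; exact: subgroupMn.
by apply/eqP; rewrite eq_sym -subr_eq0 -wn -mulrnBl wmn.
Qed.

End MaximalTorsionFree.

Theorem minimal_divisible_torsion_free (V : zmodType) (A : set V) :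
  subgroup A -> torsion_free_set A -> divisible V ->
  (forall D, subgroup D -> divisible_set D -> A `<=` D -> D = setT) ->
  torsion_free V.
Proof.
move=> sgA tfA Vdiv Amin.
have [M [sgM AM tfM Mmax]] := maximal_torsion_free_subgroup sgA tfA.
have MT_full : plus_torsion M = setT.
  apply: Amin; first exact: plus_torsion_subgroup.
    exact: plus_torsion_divisible.
  by move=> a /AM; exact: M_sub_plus_torsion.
have M_full : M = setT.
  by apply: Amin => //; exact: divisible_of_plus_torsion_full.
by apply: torsion_freeP; rewrite -M_full.
Qed.

Section AdditiveMaps.
Variables (G H : zmodType) (f : G -> H).
Hypothesis fD : forall x y, f (x + y) = f x + f y.

Lemma additive0 : f 0 = 0.
Proof. by apply: (addrI (f 0)); rewrite -fD !addr0. Qed.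

Lemma additiveN x : f (- x) = - f x.
Proof. by apply/eqP; rewrite -subr_eq0 opprK -fD addNr additive0. Qed.

Lemma additiveB x y : f (x - y) = f x - f y.
Proof. by rewrite fD additiveN. Qed.

Lemma additiveMn x n : f (x *+ n) = f x *+ n.
Proof. by elim: n => [|n IHn]; rewrite ?mulr0n ?additive0 // !mulrS fD IHn. Qed.

Lemma image_subgroup : subgroup (f @` setT).
Proof.
split; first by exists 0 => //; exact: additive0.
by move=> _ _ [x _ <-] [y _ <-]; exists (x - y) => //; exact: additiveB.
Qed.

Lemma image_torsion_free : torsion_free G -> injective f -> torsion_free_set (f @` setT).
Proof.
move=> tfG finj _ [x _ <-] [n n0]; rewrite -additiveMn -additive0 => /finj xn0.
by rewrite (tfG x n n0 xn0).
Qed.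

Lemma preimage_pure (S : set H) : torsion_free H -> pure S -> pure (f @^-1` S).
Proof.
move=> tfH [sgS pS]; split.
  split; first by rewrite /= additive0; exact: subgroup0.
  by move=> x y Sx Sy; rewrite /= additiveB; exact: subgroupB.
move=> n n0; apply/seteqP; split.
  by move=> _ [x Sx <-]; split; [rewrite /= additiveMn; exact: subgroupMn | exists x].
move=> z [Syn [y _ yz]]; subst z.
have : (S `&` [set h *+ n | h in [set: H]]) (f y *+ n).
  by split; [rewrite -additiveMn | exists (f y)].
rewrite -pS // => -[h Sh hn]; exists y => //=.
suff -> : f y = h by [].
apply/eqP; rewrite -subr_eq0; apply/eqP; apply: (tfH _ n n0).
by rewrite mulrnBl hn subrr.
Qed.

End AdditiveMaps.

Theorem corollary9 (G Gs : topologicalZmodType) (iota : G -> Gs) :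
  LCA G -> torsion_free G -> minimal_divisible_extension iota ->
  iota @` Gop G `<=` Gop Gs.
Proof.
move=> _ tfG [_ [iotaD [iota_inj [iota_cont [_ [Gs_div Gs_min]]]]]].
have tfGs : torsion_free Gs.
  apply: (minimal_divisible_torsion_free (image_subgroup iotaD)) => //.
  exact: image_torsion_free.
move=> _ [x Gop_x <-] H H_open H_pure.
apply: (Gop_x (iota @^-1` H)); first by move/continuousP: iota_cont; apply.
exact: preimage_pure.
Qed.
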